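(* Let $G$ be the infinite king grid. The code $C=\{(x,y)\in\mathbb{Z}^2\mid |x|+|y|\equiv 0\pmod 3\}$ is solid-locating-dominating in $G$ and its density is $1/3$.
   Context: The infinite king grid $G=(V,E)$ has $V=\mathbb{Z}^2$, and distinct vertices $(u_1,u_2)$, $(v_1,v_2)$ are adjacent iff $|u_1-v_1|\le1$ and $|u_2-v_2|\le1$. Let $V_n=\{(x,y)\mid |x|\le n,|y|\le n\}$; the density of a code $C\subseteq V$ is $D(C)=\limsup_{n\to\infty}|C\cap V_n|/|V_n|$. $N[v]$ is the closed neighbourhood of $v$, and for a code $C$, $I(C;v)=N[v]\cap C$. A code $C$ is solid-locating-dominating if for all distinct $u,v\in V\setminus C$, $I(C;u)\setminus I(C;v)\ne\emptyset$. *)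

From Stdlib Require Import Reals ZArith List.
From Coquelicot Require Import Coquelicot.
Import ListNotations.
Open Scope Z_scope.

Definition vertex := (Z * Z)%type.

Definition king_adj (u v : vertex) : Prop :=
  u <> v /\ Z.abs (fst u - fst v) <= 1 /\ Z.abs (snd u - snd v) <= 1.

Definition closed_nbhd (v w : vertex) : Prop := w = v \/ king_adj v w.

Definition I_set (C : vertex -> Prop) (v w : vertex) : Prop :=
  closed_nbhd v w /\ C w.

Definition solid_locating_dominating (C : vertex -> Prop) : Prop :=
  forall u v : vertex, u <> v -> ~ C u -> ~ C v ->
    exists w, I_set C u w /\ ~ I_set C v w.

Definition zrange (n : nat) : list Z :=
  map (fun k => Z.of_nat k - Z.of_nat n) (seq 0 (2 * n + 1)).

Definition V_list (n : nat) : list vertex := list_prod (zrange n) (zrange n).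

Definition count_in_V (C : vertex -> bool) (n : nat) : nat :=
  length (filter C (V_list n)).

Definition density (C : vertex -> bool) : Rbar :=
  LimSup_seq (fun n => (INR (count_in_V C n) / INR (length (V_list n)))%R).

Definition code9 (p : vertex) : bool :=
  Z.eqb ((Z.abs (fst p) + Z.abs (snd p)) mod 3) 0.

(* Every vertex u has a codeword in N[u]: inside N[u] the value |x| + |y| can be
   raised by one, and lowered by one unless u = (0,0), which is itself a codeword.
   Hence two non-codewords at Chebyshev distance >= 3 are separated by any codeword
   of N[u].  For distance <= 2 only the code on the 5x5 box around u matters, and
   once |x| >= 2 that depends on x only through its sign and x mod 3; so finitely
   many boxes occur, and they are checked by computation.
   For the density, among any three consecutive values of |y| exactly one gives a
   codeword on the row of x, so every row of V_n carries (2n+1)/3 + O(1) codewords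
   and |C ∩ V_n| = |V_n|/3 + O(n). *)

From Stdlib Require Import Reals ZArith List Lia Lra.
From Coquelicot Require Import Coquelicot.
Import ListNotations.
Open Scope Z_scope.
Open Scope bool_scope.

Definition addv (u d : vertex) : vertex := (fst u + fst d, snd u + snd d).
Definition subv (u v : vertex) : vertex := (fst u - fst v, snd u - snd v).
Definition cheb (d : vertex) : Z := Z.max (Z.abs (fst d)) (Z.abs (snd d)).
Definition norm1 (u : vertex) : Z := Z.abs (fst u) + Z.abs (snd u).

Lemma code9E u : code9 u = (norm1 u mod 3 =? 0).
Proof. reflexivity. Qed.

Lemma closed_nbhd_iff v w : closed_nbhd v w <-> cheb (subv w v) <= 1.
Proof.
  destruct v as [a b], w as [c d]; unfold closed_nbhd, king_adj, cheb, subv; simpl.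
  split.
  - intros [[= -> ->] | H]; lia.
  - intros H; destruct (Z.eq_dec a c), (Z.eq_dec b d); subst;
      [left; reflexivity | right; split; [congruence | lia] ..].
Qed.

Lemma in_zrange n z : In z (zrange n) <-> Z.abs z <= Z.of_nat n.
Proof.
  unfold zrange; rewrite in_map_iff; split.
  - intros [k [<- Hk]]; apply in_seq in Hk; lia.
  - intros H; exists (Z.to_nat (z + Z.of_nat n)); rewrite in_seq; lia.
Qed.

Lemma in_V_list n d : In d (V_list n) <-> cheb d <= Z.of_nat n.
Proof.
  destruct d as [a b]; unfold V_list, cheb, vertex; rewrite in_prod_iff, !in_zrange; simpl; lia.
Qed.

Lemma norm1_step_up u : exists w, closed_nbhd u w /\ norm1 w = norm1 u + 1.
Proof.
  destruct u as [x y]; exists (x, if 0 <=? y then y + 1 else y - 1).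
  rewrite closed_nbhd_iff; unfold cheb, subv, norm1; simpl.
  destruct (Z.leb_spec 0 y); simpl; lia.
Qed.

Lemma norm1_step_down u : u <> (0, 0) -> exists w, closed_nbhd u w /\ norm1 w = norm1 u - 1.
Proof.
  destruct u as [x y]; intros Hu.
  destruct (Z.eq_dec y 0) as [-> | Hy].
  - exists (x - Z.sgn x, 0).
    rewrite closed_nbhd_iff; unfold cheb, subv, norm1; simpl.
    assert (x <> 0) by congruence.
    destruct (Z.sgn_spec x) as [[? ->] | [[? ->] | [? ->]]]; lia.
  - exists (x, y - Z.sgn y).
    rewrite closed_nbhd_iff; unfold cheb, subv, norm1; simpl.
    destruct (Z.sgn_spec y) as [[? ->] | [[? ->] | [? ->]]]; lia.
Qed.

Lemma code9_dominating u : exists w, closed_nbhd u w /\ code9 w = true.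
Proof.
  assert (Hcode : forall w, norm1 w mod 3 = 0 -> code9 w = true)
    by (intros w H; rewrite code9E, H; reflexivity).
  destruct (Z.eq_dec (norm1 u mod 3) 0) as [H0 | H0];
    [| destruct (Z.eq_dec (norm1 u mod 3) 2) as [H2 | H2]].
  - exists u; split; [left; reflexivity | exact (Hcode u H0)].
  - destruct (norm1_step_up u) as [w [Huw Hw]]; exists w; split; [exact Huw |].
    apply Hcode; rewrite Hw; Z.to_euclidean_division_equations; lia.
  - assert (Hu : u <> (0, 0)) by (intros ->; apply H0; reflexivity).
    destruct (norm1_step_down u Hu) as [w [Huw Hw]]; exists w; split; [exact Huw |].
    apply Hcode; rewrite Hw; Z.to_euclidean_division_equations; lia.
Qed.

(* For |x| >= 2 and |d| <= 2 the sign of x + d is that of x (or it is 0), so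
   |x + d| mod 3 depends only on the sign of x and on x mod 3; fold_coord keeps
   both and lands in [-4, 4]. *)
Definition fold_coord (x : Z) : Z :=
  if 2 <=? x then 2 + (x - 2) mod 3 else if x <=? -2 then -2 - (-2 - x) mod 3 else x.

Lemma abs_add_fold_coord_mod3 x d :
  Z.abs d <= 2 -> Z.abs (fold_coord x + d) mod 3 = Z.abs (x + d) mod 3.
Proof.
  intros Hd; unfold fold_coord.
  destruct (Z.leb_spec 2 x); [| destruct (Z.leb_spec x (-2))];
    Z.to_euclidean_division_equations; lia.
Qed.

Lemma fold_coord_bound x : Z.abs (fold_coord x) <= 4.
Proof.
  unfold fold_coord.
  destruct (Z.leb_spec 2 x); [| destruct (Z.leb_spec x (-2))];
    Z.to_euclidean_division_equations; lia.
Qed.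

Definition fold_vertex (u : vertex) : vertex := (fold_coord (fst u), fold_coord (snd u)).

Lemma code9_addv_fold_vertex u d :
  cheb d <= 2 -> code9 (addv (fold_vertex u) d) = code9 (addv u d).
Proof.
  intros Hd; rewrite !code9E; unfold norm1, addv, fold_vertex, cheb in *; simpl in *.
  rewrite Z.add_mod, (Z.add_mod (Z.abs (fst u + fst d))) by lia.
  rewrite !abs_add_fold_coord_mod3 by lia; reflexivity.
Qed.

Lemma fold_vertex_in_window u : In (fold_vertex u) (V_list 4).
Proof.
  apply in_V_list; unfold fold_vertex, cheb; simpl.
  pose proof (fold_coord_bound (fst u)); pose proof (fold_coord_bound (snd u)); lia.
Qed.

(* [e] is the offset of v from u and [d] that of the separating codeword. *)
Definition separates_near (u : vertex) : bool :=
  forallb (fun e =>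
    (cheb e =? 0) || code9 (addv u (0, 0)) || code9 (addv u e) ||
    existsb (fun d => code9 (addv u d) && (1 <? cheb (subv d e))) (V_list 1))
  (V_list 2).

Lemma separates_near_window : forallb separates_near (V_list 4) = true.
Proof. vm_compute; reflexivity. Qed.

Lemma separates_near_sound u e :
  separates_near u = true -> cheb e <= 2 -> cheb e <> 0 ->
  code9 (addv u (0, 0)) = false -> code9 (addv u e) = false ->
  exists d, cheb d <= 1 /\ code9 (addv u d) = true /\ 1 < cheb (subv d e).
Proof.
  intros Hu He He0 Hu0 Hue.
  unfold separates_near in Hu; rewrite forallb_forall in Hu.
  specialize (Hu e (proj2 (in_V_list 2 e) He)).
  rewrite Hu0, Hue, (proj2 (Z.eqb_neq _ _) He0), !Bool.orb_false_l in Hu.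
  apply existsb_exists in Hu as [d [Hd Hsep]].
  rewrite Bool.andb_true_iff, Z.ltb_lt in Hsep.
  exists d; rewrite in_V_list in Hd; tauto.
Qed.

Lemma code9_separates_near u e :
  cheb e <= 2 -> cheb e <> 0 ->
  code9 (addv u (0, 0)) = false -> code9 (addv u e) = false ->
  exists d, cheb d <= 1 /\ code9 (addv u d) = true /\ 1 < cheb (subv d e).
Proof.
  intros He He0 Hu0 Hue.
  assert (Hfold : separates_near (fold_vertex u) = true).
  { pose proof separates_near_window as Hw; rewrite forallb_forall in Hw.
    exact (Hw _ (fold_vertex_in_window u)). }
  rewrite <- (code9_addv_fold_vertex u) in Hu0, Hue by (cbn; lia).
  destruct (separates_near_sound _ e Hfold He He0 Hu0 Hue) as [d [Hd [Hcode Hsep]]].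
  exists d; rewrite code9_addv_fold_vertex in Hcode by lia; auto.
Qed.

Lemma addv_0 u : addv u (0, 0) = u.
Proof. destruct u; unfold addv; simpl; f_equal; lia. Qed.

Lemma addv_subv u v : addv u (subv v u) = v.
Proof. destruct u, v; unfold addv, subv; simpl; f_equal; lia. Qed.

Lemma code9_solid_locating_dominating : solid_locating_dominating (fun p => code9 p = true).
Proof.
  intros u v Huv Hu Hv; apply Bool.not_true_iff_false in Hu, Hv.
  destruct (Z_le_gt_dec (cheb (subv v u)) 2) as [Hnear | Hfar].
  - assert (He0 : cheb (subv v u) <> 0).
    { contradict Huv; destruct u, v; unfold cheb, subv in *; simpl in *; f_equal; lia. }
    rewrite <- (addv_0 u) in Hu; rewrite <- (addv_subv u v) in Hv.
    destruct (code9_separates_near u (subv v u) Hnear He0 Hu Hv) as [d [Hd [Hcode Hsep]]].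
    exists (addv u d); split; [split; [apply closed_nbhd_iff | exact Hcode] |].
    + destruct u, d; unfold cheb, subv, addv in *; simpl in *; lia.
    + intros [Hvd _]; apply closed_nbhd_iff in Hvd.
      destruct u, v, d; unfold cheb, subv, addv in *; simpl in *; lia.
  - destruct (code9_dominating u) as [w [Huw Hw]].
    exists w; split; [split; assumption |].
    intros [Hvw _]; rewrite closed_nbhd_iff in Huw, Hvw.
    destruct u, v, w; unfold cheb, subv in *; simpl in *; lia.
Qed.

Lemma zrange_S n : zrange (S n) = - (Z.of_nat n + 1) :: zrange n ++ [Z.of_nat n + 1].
Proof.
  unfold zrange; replace (2 * S n + 1)%nat with (S (S (2 * n + 1))) by lia.
  rewrite <- cons_seq, seq_S; cbn [map app]; f_equal; [lia |].
  rewrite map_app; cbn [map]; f_equal.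
  - rewrite <- seq_shift, map_map; apply map_ext; intros; lia.
  - f_equal; lia.
Qed.

Lemma length_zrange n : length (zrange n) = (2 * n + 1)%nat.
Proof. unfold zrange; rewrite length_map, length_seq; reflexivity. Qed.

Section SymmetricCount.

Variable p : Z -> bool.
Hypothesis p_opp : forall y, p (- y) = p y.

Lemma count_zrange_S n :
  length (filter p (zrange (S n))) =
  (length (filter p (zrange n)) + 2 * Nat.b2n (p (Z.of_nat n + 1)))%nat.
Proof.
  rewrite zrange_S; cbn [filter]; rewrite p_opp, filter_app; cbn [filter].
  destruct (p (Z.of_nat n + 1)); cbn [length Nat.b2n]; rewrite ?length_app; cbn [length]; lia.
Qed.

Hypothesis p_one_in_three : forall k, 0 <= k ->
  (Nat.b2n (p (k + 1)) + Nat.b2n (p (k + 2)) + Nat.b2n (p (k + 3)) = 1)%nat.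

Lemma count_zrange_bounds n :
  2 * Z.of_nat n - 4 <= 3 * Z.of_nat (length (filter p (zrange n))) <= 2 * Z.of_nat n + 7.
Proof.
  induction n as [n IH] using lt_wf_ind.
  assert (H0 : length (filter p (zrange 0)) = Nat.b2n (p 0)) by (cbn; now destruct (p 0)).
  assert (Hb := fun y => Nat.b2n_le_1 (p y)).
  destruct n as [| [| [| n]]]; rewrite ?count_zrange_S, ?H0.
  - specialize (Hb 0); lia.
  - pose proof (Hb 0); pose proof (Hb (Z.of_nat 0 + 1)); lia.
  - pose proof (p_one_in_three 0 (Z.le_refl 0)); pose proof (Hb 0).
    change (Z.of_nat 0 + 1) with (0 + 1); change (Z.of_nat 1 + 1) with (0 + 2); lia.
  - specialize (IH n ltac:(lia)); pose proof (p_one_in_three (Z.of_nat n) ltac:(lia)).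
    replace (Z.of_nat (S (S n)) + 1) with (Z.of_nat n + 3) by lia.
    replace (Z.of_nat (S n) + 1) with (Z.of_nat n + 2) by lia.
    lia.
Qed.

End SymmetricCount.

Lemma code9_row_opp x y : code9 (x, - y) = code9 (x, y).
Proof. rewrite !code9E; unfold norm1; simpl; rewrite Z.abs_opp; reflexivity. Qed.

Lemma code9_row_one_in_three x k : 0 <= k ->
  (Nat.b2n (code9 (x, k + 1)%Z) + Nat.b2n (code9 (x, k + 2)%Z) + Nat.b2n (code9 (x, k + 3)%Z)
   = 1)%nat.
Proof.
  intros Hk; rewrite !code9E; unfold norm1; simpl.
  rewrite !(Z.abs_eq (k + _)) by lia.
  destruct (Z.eqb_spec ((Z.abs x + (k + 1)) mod 3) 0);
  destruct (Z.eqb_spec ((Z.abs x + (k + 2)) mod 3) 0);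
  destruct (Z.eqb_spec ((Z.abs x + (k + 3)) mod 3) 0);
  cbn [Nat.b2n]; Z.to_euclidean_division_equations; lia.
Qed.

Lemma length_filter_list_prod {A B : Type} (p : A * B -> bool) l1 l2 :
  length (filter p (list_prod l1 l2)) =
  list_sum (map (fun x => length (filter (fun y => p (x, y)) l2)) l1).
Proof.
  induction l1 as [| x l1 IH]; [reflexivity |]; cbn [list_prod map].
  rewrite filter_app, length_app, IH; cbn [list_sum fold_right]; f_equal.
  clear IH; induction l2 as [| y l2 IH2]; cbn; [reflexivity |].
  destruct (p (x, y)); cbn; rewrite IH2; reflexivity.
Qed.

Lemma list_sum_map_bounds {A : Type} (f : A -> nat) (l : list A) (k a b : Z) :
  (forall x, In x l -> a <= k * Z.of_nat (f x) <= b) ->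
  Z.of_nat (length l) * a <= k * Z.of_nat (list_sum (map f l)) <= Z.of_nat (length l) * b.
Proof.
  induction l as [| x l IH]; intros Hf; [cbn; lia |].
  specialize (IH (fun y Hy => Hf y (or_intror Hy))); specialize (Hf x (or_introl eq_refl)).
  change (list_sum (map f (x :: l))) with (f x + list_sum (map f l))%nat.
  cbn [length]; rewrite Nat2Z.inj_succ, Nat2Z.inj_add; lia.
Qed.

Lemma count_in_V_code9_bounds n :
  Z.abs (3 * Z.of_nat (count_in_V code9 n) - Z.of_nat (2 * n + 1) * Z.of_nat (2 * n + 1))
  <= 6 * Z.of_nat (2 * n + 1).
Proof.
  unfold count_in_V, V_list; rewrite (length_filter_list_prod code9).
  assert (Hrow := fun x (_ : In x (zrange n)) =>
    count_zrange_bounds (fun y => code9 (x, y)) (code9_row_opp x) (code9_row_one_in_three x) n).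
  apply list_sum_map_bounds in Hrow.
  rewrite length_zrange in Hrow; lia.
Qed.

Lemma length_V_list n : length (V_list n) = ((2 * n + 1) * (2 * n + 1))%nat.
Proof. unfold V_list, vertex; rewrite length_prod, length_zrange; reflexivity. Qed.

Open Scope R_scope.

Lemma ratio_error_bound (c m : R) :
  0 < m -> Rabs (3 * c - m * m) <= 6 * m -> Rabs (c / (m * m) - 1 / 3) <= 2 / m.
Proof.
  intros Hm Hc.
  replace (c / (m * m) - 1 / 3) with ((3 * c - m * m) / (3 * (m * m))) by (field; lra).
  replace (2 / m) with ((6 * m) / (3 * (m * m))) by (field; lra).
  unfold Rdiv; rewrite Rabs_mult, (Rabs_pos_eq (/ _)) by (apply Rlt_le, Rinv_0_lt_compat; nra).
  apply Rmult_le_compat_r; [apply Rlt_le, Rinv_0_lt_compat; nra | exact Hc].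
Qed.

Lemma is_lim_seq_error_bound (u : nat -> R) (l c : R) :
  (forall n, Rabs (u n - l) <= c / INR (2 * n + 1)) -> is_lim_seq u l.
Proof.
  intros Hu.
  assert (Hinf : is_lim_seq (fun n => INR (2 * n + 1)) p_infty).
  { apply is_lim_seq_le_p_loc with INR; [| exact is_lim_seq_INR].
    exists 0%nat; intros n _; apply le_INR; lia. }
  assert (Hbound : is_lim_seq (fun n => c / INR (2 * n + 1)) 0).
  { replace (Finite 0) with (Rbar_mult c (Rbar_inv p_infty)) by (cbn; f_equal; ring).
    apply is_lim_seq_scal_l, is_lim_seq_inv; [exact Hinf | discriminate]. }
  assert (Herr : is_lim_seq (fun n => u n - l) 0).
  { apply is_lim_seq_abs_0, is_lim_seq_le_le with (fun _ => 0) (fun n => c / INR (2 * n + 1));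
      [intros n; split; [apply Rabs_pos | apply Hu] | apply is_lim_seq_const | exact Hbound]. }
  apply is_lim_seq_ext with (fun n => (u n - l) + l); [intros n; ring |].
  replace (Finite l) with (Finite (0 + l)) by (f_equal; ring).
  apply is_lim_seq_plus'; [exact Herr | apply is_lim_seq_const].
Qed.

Lemma density_code9 : density code9 = Finite (1 / 3).
Proof.
  unfold density; apply is_LimSup_seq_unique, is_lim_LimSup_seq.
  apply is_lim_seq_error_bound with 2; intros n.
  rewrite length_V_list, mult_INR.
  apply ratio_error_bound; [apply lt_0_INR; lia |].
  pose proof (IZR_le _ _ (count_in_V_code9_bounds n)) as H.
  rewrite abs_IZR, minus_IZR, !mult_IZR, <- !INR_IZR_INZ in H; exact H.
Qed.

Theorem theorem9 :
  solid_locating_dominating (fun p => code9 p = true) /\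
  density code9 = Finite (1 / 3)%R.
Proof. split; [exact code9_solid_locating_dominating | exact density_code9]. Qed.
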